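(* If $\{A\}\ \Gamma ; \Delta \vdash \mathcal{C}_1$, and $\mathcal{C}_1 \longrightarrow \mathcal{C}_2$, then there exists some $\mathcal{D}$ such that $[\![\mathcal{C}_1]\!] \longrightarrow^* \mathcal{D}$ with $\mathcal{D} \equiv [\![\mathcal{C}_2]\!]$.
   Context: $\lambda_{\text{ch}}$ is a concurrent fine-grain call-by-value $\lambda$-calculus with asynchronous channels (primitives $\mathsf{fork}$, $\mathsf{give}$, $\mathsf{take}$, $\mathsf{newCh}$; configurations built from parallel composition, name restriction $(\nu a)$, terms and buffers $a(\vec V)$), extended with products, sums, recursive functions and iso-recursive types (hence lists). $\lambda_{\text{act}}$ is the analogous actor calculus (primitives $\mathsf{spawn}$, $\mathsf{send}$, $\mathsf{receive}$, $\mathsf{self}$; configurations built from parallel composition, $(\nu a)$ and actors $\langle a, M, \vec V\rangle$ with name $a$, running term $M$, mailbox $\vec V$). $\longrightarrow$ is configuration reduction (modulo structural congruence $\equiv$: commutativity/associativity of $\parallel$, scope extrusion), $\longrightarrow^*$ its reflexive-transitive closure. $\{A\}\ \Gamma;\Delta \vdash \mathcal{C}$ is the $\lambda_{\text{ch}}$ configuration typing judgement where every channel has the same type $A$. $[\![-]\!]$ is the translation from $\lambda_{\text{ch}}$ into $\lambda_{\text{act}}$ w.r.t. channel type $A$: $[\![\mathsf{Chan}]\!] = \mathsf{ActorRef}([\![A]\!] + \mathsf{ActorRef}([\![A]\!]))$; $\mathsf{give}\,V\,W \mapsto \mathsf{send}\,(\mathsf{inl}\,[\![V]\!])\,[\![W]\!]$;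 $\mathsf{take}\,V \mapsto$ let $selfPid \Leftarrow \mathsf{self}$ in $\mathsf{send}\,(\mathsf{inr}\,selfPid)\,[\![V]\!]$; $\mathsf{receive}$; $\mathsf{fork}\,M \mapsto$ let $x \Leftarrow \mathsf{spawn}\,[\![M]\!]$ in $\mathsf{return}\,()$; $\mathsf{newCh} \mapsto \mathsf{spawn}\,(\mathit{body}\,([\,],[\,]))$, where $\mathit{body}$ is a recursive loop holding a pair (list of buffered values, list of waiting pids): on receiving $\mathsf{inl}\,v$ it appends $v$ to the values, on $\mathsf{inr}\,pid$ it appends $pid$ to the waiting pids, and then calls $\mathit{drain}$, which, if both lists are non-empty, sends the head value to the head pid and removes both. On configurations the translation is homomorphic on $\parallel$ and $\nu$; a term $M$ becomes $(\nu a)\langle a, [\![M]\!], \epsilon\rangle$ for fresh $a$; a buffer $a(\vec V)$ becomes $\langle a, \mathit{body}\,([\![\vec V]\!], [\,]), \epsilon\rangle$ with $[\![\vec V]\!]$ the term-level list of translated values. *)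

(* Channel / actor names: concrete nats,
   bound by nu-restriction in configurations; alpha-conversion of nu-binders is
   part of structural congruence (rule via name swapping). *)
From Stdlib Require Import List Arith Permutation.
Import ListNotations.

Definition name := nat.

Definition swap_name (a b c : name) : name :=
  if Nat.eqb c a then b else if Nat.eqb c b then a else c.

Definition fresh (l : list name) : name := S (fold_right max 0 l).

Definition upren (r : nat -> nat) : nat -> nat :=
  fun n => match n with 0 => 0 | S n => S (r n) end.

(* Chan is the (unique) channel type, carrying values of type A.      *)
Inductive ty : Type :=
| TUnit
| TArr (A B : ty)
| TProd (A B : ty)
| TSum (A B : ty)
| TMu (A : ty)       (* mu X. A, X bound as de Bruijn index 0 *)
| TVar (n : nat)
| TChan.

Fixpoint ty_ren (r : nat -> nat) (A : ty) : ty :=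
  match A with
  | TUnit => TUnit
  | TArr A B => TArr (ty_ren r A) (ty_ren r B)
  | TProd A B => TProd (ty_ren r A) (ty_ren r B)
  | TSum A B => TSum (ty_ren r A) (ty_ren r B)
  | TMu A => TMu (ty_ren (upren r) A)
  | TVar n => TVar (r n)
  | TChan => TChan
  end.

Definition ty_up (s : nat -> ty) : nat -> ty :=
  fun n => match n with 0 => TVar 0 | S n => ty_ren S (s n) end.

Fixpoint ty_subst (s : nat -> ty) (A : ty) : ty :=
  match A with
  | TUnit => TUnit
  | TArr A B => TArr (ty_subst s A) (ty_subst s B)
  | TProd A B => TProd (ty_subst s A) (ty_subst s B)
  | TSum A B => TSum (ty_subst s A) (ty_subst s B)
  | TMu A => TMu (ty_subst (ty_up s) A)
  | TVar n => s n
  | TChan => TChan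
  end.

Definition ty_unfold (A : ty) : ty :=
  ty_subst (fun n => match n with 0 => TMu A | S n => TVar n end) A.

Inductive ch_val : Type :=
| ChVar (n : nat)
| ChName (a : name)
| ChUnit
| ChLam (M : ch_comp)            (* binds x = 0 *)
| ChRec (M : ch_comp)            (* rec f(x).M : x = 0, f = 1 *)
| ChPair (V W : ch_val)
| ChInl (V : ch_val)
| ChInr (V : ch_val)
| ChRoll (V : ch_val)
with ch_comp : Type :=
| ChApp (V W : ch_val)
| ChLet (M N : ch_comp)          (* let x <= M in N ; x = 0 in N *)
| ChReturn (V : ch_val)
| ChLetPair (V : ch_val) (M : ch_comp)  (* let (x,y) = V in M ; y = 0, x = 1 *)
| ChCase (V : ch_val) (M N : ch_comp)
| ChUnroll (V : ch_val)
| ChFork (M : ch_comp)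
| ChGive (V W : ch_val)          (* give V W : send V on channel W *)
| ChTake (V : ch_val)
| ChNewCh.

Fixpoint ch_ren_val (r : nat -> nat) (V : ch_val) : ch_val :=
  match V with
  | ChVar n => ChVar (r n)
  | ChName a => ChName a
  | ChUnit => ChUnit
  | ChLam M => ChLam (ch_ren_comp (upren r) M)
  | ChRec M => ChRec (ch_ren_comp (upren (upren r)) M)
  | ChPair V W => ChPair (ch_ren_val r V) (ch_ren_val r W)
  | ChInl V => ChInl (ch_ren_val r V)
  | ChInr V => ChInr (ch_ren_val r V)
  | ChRoll V => ChRoll (ch_ren_val r V)
  end
with ch_ren_comp (r : nat -> nat) (M : ch_comp) : ch_comp :=
  match M with
  | ChApp V W => ChApp (ch_ren_val r V) (ch_ren_val r W)
  | ChLet M N => ChLet (ch_ren_comp r M) (ch_ren_comp (upren r) N)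
  | ChReturn V => ChReturn (ch_ren_val r V)
  | ChLetPair V M => ChLetPair (ch_ren_val r V) (ch_ren_comp (upren (upren r)) M)
  | ChCase V M N => ChCase (ch_ren_val r V) (ch_ren_comp (upren r) M) (ch_ren_comp (upren r) N)
  | ChUnroll V => ChUnroll (ch_ren_val r V)
  | ChFork M => ChFork (ch_ren_comp r M)
  | ChGive V W => ChGive (ch_ren_val r V) (ch_ren_val r W)
  | ChTake V => ChTake (ch_ren_val r V)
  | ChNewCh => ChNewCh
  end.

Definition ch_up (s : nat -> ch_val) : nat -> ch_val :=
  fun n => match n with 0 => ChVar 0 | S n => ch_ren_val S (s n) end.

Fixpoint ch_subst_val (s : nat -> ch_val) (V : ch_val) : ch_val :=
  match V with
  | ChVar n => s n
  | ChName a => ChName a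
  | ChUnit => ChUnit
  | ChLam M => ChLam (ch_subst_comp (ch_up s) M)
  | ChRec M => ChRec (ch_subst_comp (ch_up (ch_up s)) M)
  | ChPair V W => ChPair (ch_subst_val s V) (ch_subst_val s W)
  | ChInl V => ChInl (ch_subst_val s V)
  | ChInr V => ChInr (ch_subst_val s V)
  | ChRoll V => ChRoll (ch_subst_val s V)
  end
with ch_subst_comp (s : nat -> ch_val) (M : ch_comp) : ch_comp :=
  match M with
  | ChApp V W => ChApp (ch_subst_val s V) (ch_subst_val s W)
  | ChLet M N => ChLet (ch_subst_comp s M) (ch_subst_comp (ch_up s) N)
  | ChReturn V => ChReturn (ch_subst_val s V)
  | ChLetPair V M => ChLetPair (ch_subst_val s V) (ch_subst_comp (ch_up (ch_up s)) M)
  | ChCase V M N => ChCase (ch_subst_val s V) (ch_subst_comp (ch_up s) M) (ch_subst_comp (ch_up s) N)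
  | ChUnroll V => ChUnroll (ch_subst_val s V)
  | ChFork M => ChFork (ch_subst_comp s M)
  | ChGive V W => ChGive (ch_subst_val s V) (ch_subst_val s W)
  | ChTake V => ChTake (ch_subst_val s V)
  | ChNewCh => ChNewCh
  end.

Definition ch_scons (V : ch_val) (s : nat -> ch_val) : nat -> ch_val :=
  fun n => match n with 0 => V | S n => s n end.

Fixpoint ch_fn_val (V : ch_val) : list name :=
  match V with
  | ChVar _ | ChUnit => []
  | ChName a => [a]
  | ChLam M | ChRec M => ch_fn_comp M
  | ChPair V W => ch_fn_val V ++ ch_fn_val W
  | ChInl V | ChInr V | ChRoll V => ch_fn_val V
  end
with ch_fn_comp (M : ch_comp) : list name :=
  match M with
  | ChApp V W | ChGive V W => ch_fn_val V ++ ch_fn_val W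
  | ChLet M N => ch_fn_comp M ++ ch_fn_comp N
  | ChReturn V | ChUnroll V | ChTake V => ch_fn_val V
  | ChLetPair V M => ch_fn_val V ++ ch_fn_comp M
  | ChCase V M N => ch_fn_val V ++ ch_fn_comp M ++ ch_fn_comp N
  | ChFork M => ch_fn_comp M
  | ChNewCh => []
  end.

Fixpoint ch_swap_val (a b : name) (V : ch_val) : ch_val :=
  match V with
  | ChVar n => ChVar n
  | ChName c => ChName (swap_name a b c)
  | ChUnit => ChUnit
  | ChLam M => ChLam (ch_swap_comp a b M)
  | ChRec M => ChRec (ch_swap_comp a b M)
  | ChPair V W => ChPair (ch_swap_val a b V) (ch_swap_val a b W)
  | ChInl V => ChInl (ch_swap_val a b V)
  | ChInr V => ChInr (ch_swap_val a b V)
  | ChRoll V => ChRoll (ch_swap_val a b V)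
  end
with ch_swap_comp (a b : name) (M : ch_comp) : ch_comp :=
  match M with
  | ChApp V W => ChApp (ch_swap_val a b V) (ch_swap_val a b W)
  | ChLet M N => ChLet (ch_swap_comp a b M) (ch_swap_comp a b N)
  | ChReturn V => ChReturn (ch_swap_val a b V)
  | ChLetPair V M => ChLetPair (ch_swap_val a b V) (ch_swap_comp a b M)
  | ChCase V M N => ChCase (ch_swap_val a b V) (ch_swap_comp a b M) (ch_swap_comp a b N)
  | ChUnroll V => ChUnroll (ch_swap_val a b V)
  | ChFork M => ChFork (ch_swap_comp a b M)
  | ChGive V W => ChGive (ch_swap_val a b V) (ch_swap_val a b W)
  | ChTake V => ChTake (ch_swap_val a b V)
  | ChNewCh => ChNewCh
  end.

Inductive ch_ectx : Type :=
| ChHole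
| ChELet (E : ch_ectx) (N : ch_comp).

Fixpoint ch_plug (E : ch_ectx) (M : ch_comp) : ch_comp :=
  match E with
  | ChHole => M
  | ChELet E N => ChLet (ch_plug E M) N
  end.

Inductive ch_tbase : ch_comp -> ch_comp -> Prop :=
| chb_lam M V :
    ch_tbase (ChApp (ChLam M) V) (ch_subst_comp (ch_scons V ChVar) M)
| chb_rec M V :
    ch_tbase (ChApp (ChRec M) V)
             (ch_subst_comp (ch_scons V (ch_scons (ChRec M) ChVar)) M)
| chb_let V M :
    ch_tbase (ChLet (ChReturn V) M) (ch_subst_comp (ch_scons V ChVar) M)
| chb_pair V W M :
    ch_tbase (ChLetPair (ChPair V W) M) (ch_subst_comp (ch_scons W (ch_scons V ChVar)) M)
| chb_inl V M N :
    ch_tbase (ChCase (ChInl V) M N) (ch_subst_comp (ch_scons V ChVar) M)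
| chb_inr V M N :
    ch_tbase (ChCase (ChInr V) M N) (ch_subst_comp (ch_scons V ChVar) N)
| chb_roll V :
    ch_tbase (ChUnroll (ChRoll V)) (ChReturn V).

Inductive ch_tstep : ch_comp -> ch_comp -> Prop :=
| ch_tstep_ctx E M N : ch_tbase M N -> ch_tstep (ch_plug E M) (ch_plug E N).

Inductive ch_cfg : Type :=
| ChPar (C D : ch_cfg)
| ChNu (a : name) (C : ch_cfg)
| ChTerm (M : ch_comp)
| ChBuf (a : name) (Vs : list ch_val).

Fixpoint ch_cfg_fn (C : ch_cfg) : list name :=
  match C with
  | ChPar C D => ch_cfg_fn C ++ ch_cfg_fn D
  | ChNu a C => remove Nat.eq_dec a (ch_cfg_fn C)
  | ChTerm M => ch_fn_comp M
  | ChBuf a Vs => a :: flat_map ch_fn_val Vs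
  end.

Fixpoint ch_cfg_swap (a b : name) (C : ch_cfg) : ch_cfg :=
  match C with
  | ChPar C D => ChPar (ch_cfg_swap a b C) (ch_cfg_swap a b D)
  | ChNu c C => ChNu (swap_name a b c) (ch_cfg_swap a b C)
  | ChTerm M => ChTerm (ch_swap_comp a b M)
  | ChBuf c Vs => ChBuf (swap_name a b c) (map (ch_swap_val a b) Vs)
  end.

Inductive ch_cong : ch_cfg -> ch_cfg -> Prop :=
| chc_refl C : ch_cong C C
| chc_sym C D : ch_cong C D -> ch_cong D C
| chc_trans C D E : ch_cong C D -> ch_cong D E -> ch_cong C E
| chc_comm C D : ch_cong (ChPar C D) (ChPar D C)
| chc_assoc C D E : ch_cong (ChPar C (ChPar D E)) (ChPar (ChPar C D) E)
| chc_extr a C D : ~ In a (ch_cfg_fn C) ->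
    ch_cong (ChPar C (ChNu a D)) (ChNu a (ChPar C D))
| chc_nu_swap a b C : ch_cong (ChNu a (ChNu b C)) (ChNu b (ChNu a C))
| chc_alpha a b C : ~ In b (ch_cfg_fn C) ->
    ch_cong (ChNu a C) (ChNu b (ch_cfg_swap a b C))
| chc_par C D E : ch_cong C D -> ch_cong (ChPar C E) (ChPar D E)
| chc_nu a C D : ch_cong C D -> ch_cong (ChNu a C) (ChNu a D).

Inductive ch_step : ch_cfg -> ch_cfg -> Prop :=
| chs_give E W a Vs :
    ch_step (ChPar (ChTerm (ch_plug E (ChGive W (ChName a)))) (ChBuf a Vs))
            (ChPar (ChTerm (ch_plug E (ChReturn ChUnit))) (ChBuf a (Vs ++ [W])))
| chs_take E W a Vs :
    ch_step (ChPar (ChTerm (ch_plug E (ChTake (ChName a)))) (ChBuf a (W :: Vs)))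
            (ChPar (ChTerm (ch_plug E (ChReturn W))) (ChBuf a Vs))
| chs_fork E M :
    ch_step (ChTerm (ch_plug E (ChFork M)))
            (ChPar (ChTerm (ch_plug E (ChReturn ChUnit))) (ChTerm M))
| chs_newch E a :
    ~ In a (ch_fn_comp (ch_plug E ChNewCh)) ->
    ch_step (ChTerm (ch_plug E ChNewCh))
            (ChNu a (ChPar (ChTerm (ch_plug E (ChReturn (ChName a)))) (ChBuf a [])))
| chs_liftM M N : ch_tstep M N -> ch_step (ChTerm M) (ChTerm N)
| chs_nu a C D : ch_step C D -> ch_step (ChNu a C) (ChNu a D)
| chs_par C D E : ch_step C D -> ch_step (ChPar C E) (ChPar D E)
| chs_equiv C C' D' D :
    ch_cong C C' -> ch_step C' D' -> ch_cong D' D -> ch_step C D.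

(* typing: {A} Gamma ; Delta |- C, all channels of type Chan(A).
   Gamma of terms is split into the names in scope (all of type Chan)
   and a de Bruijn context for term variables. *)
Inductive ch_val_typed (A : ty) (Nm : list name) : list ty -> ch_val -> ty -> Prop :=
| chtv_var G n T : nth_error G n = Some T -> ch_val_typed A Nm G (ChVar n) T
| chtv_name G a : In a Nm -> ch_val_typed A Nm G (ChName a) TChan
| chtv_unit G : ch_val_typed A Nm G ChUnit TUnit
| chtv_lam G M T1 T2 :
    ch_comp_typed A Nm (T1 :: G) M T2 -> ch_val_typed A Nm G (ChLam M) (TArr T1 T2)
| chtv_rec G M T1 T2 :
    ch_comp_typed A Nm (T1 :: TArr T1 T2 :: G) M T2 ->
    ch_val_typed A Nm G (ChRec M) (TArr T1 T2)
| chtv_pair G V W T1 T2 :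
    ch_val_typed A Nm G V T1 -> ch_val_typed A Nm G W T2 ->
    ch_val_typed A Nm G (ChPair V W) (TProd T1 T2)
| chtv_inl G V T1 T2 :
    ch_val_typed A Nm G V T1 -> ch_val_typed A Nm G (ChInl V) (TSum T1 T2)
| chtv_inr G V T1 T2 :
    ch_val_typed A Nm G V T2 -> ch_val_typed A Nm G (ChInr V) (TSum T1 T2)
| chtv_roll G V T :
    ch_val_typed A Nm G V (ty_unfold T) -> ch_val_typed A Nm G (ChRoll V) (TMu T)
with ch_comp_typed (A : ty) (Nm : list name) : list ty -> ch_comp -> ty -> Prop :=
| chtc_app G V W T1 T2 :
    ch_val_typed A Nm G V (TArr T1 T2) -> ch_val_typed A Nm G W T1 ->
    ch_comp_typed A Nm G (ChApp V W) T2
| chtc_let G M N T1 T2 :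
    ch_comp_typed A Nm G M T1 -> ch_comp_typed A Nm (T1 :: G) N T2 ->
    ch_comp_typed A Nm G (ChLet M N) T2
| chtc_return G V T :
    ch_val_typed A Nm G V T -> ch_comp_typed A Nm G (ChReturn V) T
| chtc_letpair G V M T1 T2 T :
    ch_val_typed A Nm G V (TProd T1 T2) -> ch_comp_typed A Nm (T2 :: T1 :: G) M T ->
    ch_comp_typed A Nm G (ChLetPair V M) T
| chtc_case G V M N T1 T2 T :
    ch_val_typed A Nm G V (TSum T1 T2) ->
    ch_comp_typed A Nm (T1 :: G) M T -> ch_comp_typed A Nm (T2 :: G) N T ->
    ch_comp_typed A Nm G (ChCase V M N) T
| chtc_unroll G V T :
    ch_val_typed A Nm G V (TMu T) -> ch_comp_typed A Nm G (ChUnroll V) (ty_unfold T)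
| chtc_fork G M :
    ch_comp_typed A Nm G M TUnit -> ch_comp_typed A Nm G (ChFork M) TUnit
| chtc_give G V W :
    ch_val_typed A Nm G V A -> ch_val_typed A Nm G W TChan ->
    ch_comp_typed A Nm G (ChGive V W) TUnit
| chtc_take G V :
    ch_val_typed A Nm G V TChan -> ch_comp_typed A Nm G (ChTake V) A
| chtc_newch G : ch_comp_typed A Nm G ChNewCh TChan.

Inductive ch_cfg_typed (A : ty) : list name -> list name -> ch_cfg -> Prop :=
| chtg_par Gm Dl Dl1 Dl2 C1 C2 :
    ch_cfg_typed A Gm Dl1 C1 -> ch_cfg_typed A Gm Dl2 C2 ->
    NoDup (Dl1 ++ Dl2) -> Permutation Dl (Dl1 ++ Dl2) ->
    ch_cfg_typed A Gm Dl (ChPar C1 C2)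
| chtg_nu Gm Dl a C :
    ~ In a Gm -> ~ In a Dl ->
    ch_cfg_typed A (a :: Gm) (a :: Dl) C -> ch_cfg_typed A Gm Dl (ChNu a C)
| chtg_term Gm M T :
    ch_comp_typed A Gm [] M T -> ch_cfg_typed A Gm [] (ChTerm M)
| chtg_buf Gm a Vs :
    Forall (fun V => ch_val_typed A Gm [] V A) Vs ->
    ch_cfg_typed A Gm [a] (ChBuf a Vs).

(* lambda_act syntax and semantics (untyped: only the operational     *)
(* semantics is needed)                                               *)
Inductive act_val : Type :=
| ActVar (n : nat)
| ActName (a : name)
| ActUnit
| ActLam (M : act_comp)
| ActRec (M : act_comp)
| ActPair (V W : act_val)
| ActInl (V : act_val)
| ActInr (V : act_val)
| ActRoll (V : act_val)
with act_comp : Type :=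
| ActApp (V W : act_val)
| ActLet (M N : act_comp)
| ActReturn (V : act_val)
| ActLetPair (V : act_val) (M : act_comp)
| ActCase (V : act_val) (M N : act_comp)
| ActUnroll (V : act_val)
| ActSpawn (M : act_comp)
| ActSend (V W : act_val)        (* send V W : send message V to actor W *)
| ActReceive
| ActSelf.

Fixpoint act_ren_val (r : nat -> nat) (V : act_val) : act_val :=
  match V with
  | ActVar n => ActVar (r n)
  | ActName a => ActName a
  | ActUnit => ActUnit
  | ActLam M => ActLam (act_ren_comp (upren r) M)
  | ActRec M => ActRec (act_ren_comp (upren (upren r)) M)
  | ActPair V W => ActPair (act_ren_val r V) (act_ren_val r W)
  | ActInl V => ActInl (act_ren_val r V)
  | ActInr V => ActInr (act_ren_val r V)
  | ActRoll V => ActRoll (act_ren_val r V)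
  end
with act_ren_comp (r : nat -> nat) (M : act_comp) : act_comp :=
  match M with
  | ActApp V W => ActApp (act_ren_val r V) (act_ren_val r W)
  | ActLet M N => ActLet (act_ren_comp r M) (act_ren_comp (upren r) N)
  | ActReturn V => ActReturn (act_ren_val r V)
  | ActLetPair V M => ActLetPair (act_ren_val r V) (act_ren_comp (upren (upren r)) M)
  | ActCase V M N => ActCase (act_ren_val r V) (act_ren_comp (upren r) M) (act_ren_comp (upren r) N)
  | ActUnroll V => ActUnroll (act_ren_val r V)
  | ActSpawn M => ActSpawn (act_ren_comp r M)
  | ActSend V W => ActSend (act_ren_val r V) (act_ren_val r W)
  | ActReceive => ActReceive
  | ActSelf => ActSelf
  end.

Definition act_up (s : nat -> act_val) : nat -> act_val :=
  fun n => match n with 0 => ActVar 0 | S n => act_ren_val S (s n) end.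

Fixpoint act_subst_val (s : nat -> act_val) (V : act_val) : act_val :=
  match V with
  | ActVar n => s n
  | ActName a => ActName a
  | ActUnit => ActUnit
  | ActLam M => ActLam (act_subst_comp (act_up s) M)
  | ActRec M => ActRec (act_subst_comp (act_up (act_up s)) M)
  | ActPair V W => ActPair (act_subst_val s V) (act_subst_val s W)
  | ActInl V => ActInl (act_subst_val s V)
  | ActInr V => ActInr (act_subst_val s V)
  | ActRoll V => ActRoll (act_subst_val s V)
  end
with act_subst_comp (s : nat -> act_val) (M : act_comp) : act_comp :=
  match M with
  | ActApp V W => ActApp (act_subst_val s V) (act_subst_val s W)
  | ActLet M N => ActLet (act_subst_comp s M) (act_subst_comp (act_up s) N)
  | ActReturn V => ActReturn (act_subst_val s V)
  | ActLetPair V M => ActLetPair (act_subst_val s V) (act_subst_comp (act_up (act_up s)) M)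
  | ActCase V M N => ActCase (act_subst_val s V) (act_subst_comp (act_up s) M) (act_subst_comp (act_up s) N)
  | ActUnroll V => ActUnroll (act_subst_val s V)
  | ActSpawn M => ActSpawn (act_subst_comp s M)
  | ActSend V W => ActSend (act_subst_val s V) (act_subst_val s W)
  | ActReceive => ActReceive
  | ActSelf => ActSelf
  end.

Definition act_scons (V : act_val) (s : nat -> act_val) : nat -> act_val :=
  fun n => match n with 0 => V | S n => s n end.

Fixpoint act_fn_val (V : act_val) : list name :=
  match V with
  | ActVar _ | ActUnit => []
  | ActName a => [a]
  | ActLam M | ActRec M => act_fn_comp M
  | ActPair V W => act_fn_val V ++ act_fn_val W
  | ActInl V | ActInr V | ActRoll V => act_fn_val V
  end
with act_fn_comp (M : act_comp) : list name :=
  match M with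
  | ActApp V W | ActSend V W => act_fn_val V ++ act_fn_val W
  | ActLet M N => act_fn_comp M ++ act_fn_comp N
  | ActReturn V | ActUnroll V => act_fn_val V
  | ActLetPair V M => act_fn_val V ++ act_fn_comp M
  | ActCase V M N => act_fn_val V ++ act_fn_comp M ++ act_fn_comp N
  | ActSpawn M => act_fn_comp M
  | ActReceive | ActSelf => []
  end.

Fixpoint act_swap_val (a b : name) (V : act_val) : act_val :=
  match V with
  | ActVar n => ActVar n
  | ActName c => ActName (swap_name a b c)
  | ActUnit => ActUnit
  | ActLam M => ActLam (act_swap_comp a b M)
  | ActRec M => ActRec (act_swap_comp a b M)
  | ActPair V W => ActPair (act_swap_val a b V) (act_swap_val a b W)
  | ActInl V => ActInl (act_swap_val a b V)
  | ActInr V => ActInr (act_swap_val a b V)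
  | ActRoll V => ActRoll (act_swap_val a b V)
  end
with act_swap_comp (a b : name) (M : act_comp) : act_comp :=
  match M with
  | ActApp V W => ActApp (act_swap_val a b V) (act_swap_val a b W)
  | ActLet M N => ActLet (act_swap_comp a b M) (act_swap_comp a b N)
  | ActReturn V => ActReturn (act_swap_val a b V)
  | ActLetPair V M => ActLetPair (act_swap_val a b V) (act_swap_comp a b M)
  | ActCase V M N => ActCase (act_swap_val a b V) (act_swap_comp a b M) (act_swap_comp a b N)
  | ActUnroll V => ActUnroll (act_swap_val a b V)
  | ActSpawn M => ActSpawn (act_swap_comp a b M)
  | ActSend V W => ActSend (act_swap_val a b V) (act_swap_val a b W)
  | ActReceive => ActReceive
  | ActSelf => ActSelf
  end.

Inductive act_ectx : Type :=
| ActHole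
| ActELet (E : act_ectx) (N : act_comp).

Fixpoint act_plug (E : act_ectx) (M : act_comp) : act_comp :=
  match E with
  | ActHole => M
  | ActELet E N => ActLet (act_plug E M) N
  end.

Inductive act_tbase : act_comp -> act_comp -> Prop :=
| actb_lam M V :
    act_tbase (ActApp (ActLam M) V) (act_subst_comp (act_scons V ActVar) M)
| actb_rec M V :
    act_tbase (ActApp (ActRec M) V)
              (act_subst_comp (act_scons V (act_scons (ActRec M) ActVar)) M)
| actb_let V M :
    act_tbase (ActLet (ActReturn V) M) (act_subst_comp (act_scons V ActVar) M)
| actb_pair V W M :
    act_tbase (ActLetPair (ActPair V W) M) (act_subst_comp (act_scons W (act_scons V ActVar)) M)
| actb_inl V M N :
    act_tbase (ActCase (ActInl V) M N) (act_subst_comp (act_scons V ActVar) M)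
| actb_inr V M N :
    act_tbase (ActCase (ActInr V) M N) (act_subst_comp (act_scons V ActVar) N)
| actb_roll V :
    act_tbase (ActUnroll (ActRoll V)) (ActReturn V).

Inductive act_tstep : act_comp -> act_comp -> Prop :=
| act_tstep_ctx E M N : act_tbase M N -> act_tstep (act_plug E M) (act_plug E N).

(* configurations: parallel, restriction, actor <a, M, mailbox> *)
Inductive act_cfg : Type :=
| ActPar (C D : act_cfg)
| ActNu (a : name) (C : act_cfg)
| ActActor (a : name) (M : act_comp) (Vs : list act_val).

Fixpoint act_cfg_fn (C : act_cfg) : list name :=
  match C with
  | ActPar C D => act_cfg_fn C ++ act_cfg_fn D
  | ActNu a C => remove Nat.eq_dec a (act_cfg_fn C)
  | ActActor a M Vs => a :: act_fn_comp M ++ flat_map act_fn_val Vs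
  end.

Fixpoint act_cfg_swap (a b : name) (C : act_cfg) : act_cfg :=
  match C with
  | ActPar C D => ActPar (act_cfg_swap a b C) (act_cfg_swap a b D)
  | ActNu c C => ActNu (swap_name a b c) (act_cfg_swap a b C)
  | ActActor c M Vs =>
      ActActor (swap_name a b c) (act_swap_comp a b M) (map (act_swap_val a b) Vs)
  end.

Inductive act_cong : act_cfg -> act_cfg -> Prop :=
| actc_refl C : act_cong C C
| actc_sym C D : act_cong C D -> act_cong D C
| actc_trans C D E : act_cong C D -> act_cong D E -> act_cong C E
| actc_comm C D : act_cong (ActPar C D) (ActPar D C)
| actc_assoc C D E : act_cong (ActPar C (ActPar D E)) (ActPar (ActPar C D) E)
| actc_extr a C D : ~ In a (act_cfg_fn C) ->
    act_cong (ActPar C (ActNu a D)) (ActNu a (ActPar C D))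
| actc_nu_swap a b C : act_cong (ActNu a (ActNu b C)) (ActNu b (ActNu a C))
| actc_alpha a b C : ~ In b (act_cfg_fn C) ->
    act_cong (ActNu a C) (ActNu b (act_cfg_swap a b C))
| actc_par C D E : act_cong C D -> act_cong (ActPar C E) (ActPar D E)
| actc_nu a C D : act_cong C D -> act_cong (ActNu a C) (ActNu a D).

Inductive act_step : act_cfg -> act_cfg -> Prop :=
| acts_spawn a E M Vs b :
    ~ In b (act_cfg_fn (ActActor a (act_plug E (ActSpawn M)) Vs)) ->
    act_step (ActActor a (act_plug E (ActSpawn M)) Vs)
             (ActNu b (ActPar (ActActor a (act_plug E (ActReturn (ActName b))) Vs)
                              (ActActor b M [])))
| acts_send a E V b M Vs Ws :
    act_step (ActPar (ActActor a (act_plug E (ActSend V (ActName b))) Vs) (ActActor b M Ws))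
             (ActPar (ActActor a (act_plug E (ActReturn ActUnit)) Vs) (ActActor b M (Ws ++ [V])))
| acts_sendself a E V Vs :
    act_step (ActActor a (act_plug E (ActSend V (ActName a))) Vs)
             (ActActor a (act_plug E (ActReturn ActUnit)) (Vs ++ [V]))
| acts_self a E Vs :
    act_step (ActActor a (act_plug E ActSelf) Vs)
             (ActActor a (act_plug E (ActReturn (ActName a))) Vs)
| acts_receive a E W Vs :
    act_step (ActActor a (act_plug E ActReceive) (W :: Vs))
             (ActActor a (act_plug E (ActReturn W)) Vs)
| acts_liftM a M N Vs : act_tstep M N -> act_step (ActActor a M Vs) (ActActor a N Vs)
| acts_nu a C D : act_step C D -> act_step (ActNu a C) (ActNu a D)
| acts_par C D E : act_step C D -> act_step (ActPar C E) (ActPar D E)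
| acts_equiv C C' D' D :
    act_cong C C' -> act_step C' D' -> act_cong D' D -> act_step C D.

Inductive act_steps : act_cfg -> act_cfg -> Prop :=
| act_steps_refl C : act_steps C C
| act_steps_cons C D E : act_step C D -> act_steps D E -> act_steps C E.

(* term-level lists: [] = roll (inl ()), v :: vs = roll (inr (v, vs)) *)
Definition act_nil : act_val := ActRoll (ActInl ActUnit).
Definition act_cons (v vs : act_val) : act_val := ActRoll (ActInr (ActPair v vs)).
Fixpoint act_list (l : list act_val) : act_val :=
  match l with
  | [] => act_nil
  | v :: l => act_cons v (act_list l)
  end.

(* append: rec app(p). let (xs, ys) = p in
     case xs { [] -> return ys ; x :: xs' -> let r <= app (xs', ys) in return (x :: r) } *)
Definition act_append : act_val :=
  ActRec
    (ActLetPair (ActVar 0)                         (* ys=0, xs=1, p=2, app=3 *)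
      (ActLet (ActUnroll (ActVar 1))               (* z=0, ys=1, xs=2, p=3, app=4 *)
        (ActCase (ActVar 0)
          (ActReturn (ActVar 2))                   (* u, z, ys=2 *)
          (ActLetPair (ActVar 0)                   (* q=0 ; then xs'=0, x=1, q, z, ys=4, xs, p, app=7 *)
            (ActLet (ActApp (ActVar 7) (ActPair (ActVar 0) (ActVar 4)))
              (ActReturn (act_cons (ActVar 2) (ActVar 0)))))))).  (* r=0, xs', x=2 *)

(* drain = fun x. let (vals, pids) = x in
     case vals { [] -> return (vals, pids)
               ; v :: vs -> case pids { [] -> return (vals, pids)
                                      ; pid :: pids' -> send v pid; return (vs, pids') } } *)
Definition act_drain : act_val :=
  ActLam
    (ActLetPair (ActVar 0)                                (* pids=0, vals=1, x=2 *)
      (ActLet (ActUnroll (ActVar 1))                      (* z, pids=1, vals=2, x *)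
        (ActCase (ActVar 0)
          (ActReturn (ActPair (ActVar 3) (ActVar 2)))     (* u, z, pids=2, vals=3 *)
          (ActLetPair (ActVar 0)                          (* vs=0, v=1, q, z, pids=4, vals=5, x *)
            (ActLet (ActUnroll (ActVar 4))                (* z2, vs, v, q, z, pids=5, vals=6 *)
              (ActCase (ActVar 0)
                (ActReturn (ActPair (ActVar 7) (ActVar 6)))  (* u, z2, vs, v, q, z, pids=6, vals=7 *)
                (ActLetPair (ActVar 0)                    (* pids'=0, pid=1, q2, z2, vs=4, v=5 *)
                  (ActLet (ActSend (ActVar 5) (ActVar 1))
                    (ActReturn (ActPair (ActVar 5) (ActVar 1))))))))))). (* _, pids'=1, pid, q2, z2, vs=5 *)

(* body = rec g(state). let msg <= receive in let (vals, pids) = state in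
     case msg { inl v   -> let vals' <= vals ++ [v] in
                           let state' <= drain (vals', pids) in g state'
              ; inr pid -> let pids' <= pids ++ [pid] in
                           let state' <= drain (vals, pids') in g state' } *)
Definition act_body : act_val :=
  ActRec
    (ActLet ActReceive                                  (* msg=0, state=1, g=2 *)
      (ActLetPair (ActVar 1)                            (* pids=0, vals=1, msg=2, state=3, g=4 *)
        (ActCase (ActVar 2)
          (* v=0, pids=1, vals=2, msg, state, g=5 *)
          (ActLet (ActApp act_append (ActPair (ActVar 2) (act_cons (ActVar 0) act_nil)))
            (* vals'=0, v, pids=2, vals, msg, state, g=6 *)
            (ActLet (ActApp act_drain (ActPair (ActVar 0) (ActVar 2)))
              (* state'=0, ..., g=7 *)
              (ActApp (ActVar 7) (ActVar 0))))
          (* pid=0, pids=1, vals=2, msg, state, g=5 *)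
          (ActLet (ActApp act_append (ActPair (ActVar 1) (act_cons (ActVar 0) act_nil)))
            (* pids'=0, pid, pids, vals=3, msg, state, g=6 *)
            (ActLet (ActApp act_drain (ActPair (ActVar 3) (ActVar 0)))
              (ActApp (ActVar 7) (ActVar 0))))))).

Fixpoint tr_val (V : ch_val) : act_val :=
  match V with
  | ChVar n => ActVar n
  | ChName a => ActName a
  | ChUnit => ActUnit
  | ChLam M => ActLam (tr_comp M)
  | ChRec M => ActRec (tr_comp M)
  | ChPair V W => ActPair (tr_val V) (tr_val W)
  | ChInl V => ActInl (tr_val V)
  | ChInr V => ActInr (tr_val V)
  | ChRoll V => ActRoll (tr_val V)
  end
with tr_comp (M : ch_comp) : act_comp :=
  match M with
  | ChApp V W => ActApp (tr_val V) (tr_val W)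
  | ChLet M N => ActLet (tr_comp M) (tr_comp N)
  | ChReturn V => ActReturn (tr_val V)
  | ChLetPair V M => ActLetPair (tr_val V) (tr_comp M)
  | ChCase V M N => ActCase (tr_val V) (tr_comp M) (tr_comp N)
  | ChUnroll V => ActUnroll (tr_val V)
  | ChGive V W => ActSend (ActInl (tr_val V)) (tr_val W)
  | ChTake V =>
      ActLet ActSelf
        (ActLet (ActSend (ActInr (ActVar 0)) (act_ren_val S (tr_val V))) ActReceive)
  | ChFork M => ActLet (ActSpawn (tr_comp M)) (ActReturn ActUnit)
  | ChNewCh => ActSpawn (ActApp act_body (ActPair act_nil act_nil))
  end.

Fixpoint tr_cfg (C : ch_cfg) : act_cfg :=
  match C with
  | ChPar C D => ActPar (tr_cfg C) (tr_cfg D)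
  | ChNu a C => ActNu a (tr_cfg C)
  | ChTerm M =>
      let b := fresh (ch_fn_comp M) in ActNu b (ActActor b (tr_comp M) [])
  | ChBuf a Vs =>
      ActActor a (ActApp act_body (ActPair (act_list (map tr_val Vs)) act_nil)) []
  end.

(* Each construct of lambda_ch is translated compositionally, and the
   translation commutes with renaming, substitution, evaluation contexts and
   name swapping; hence beta-steps become beta-steps and structural congruence
   becomes structural congruence.  The channel primitives are simulated by a
   short run of the channel actor [act_body]: [give] sends it [inl v], which
   it appends to its buffer; [take] sends it [inr pid], and its [drain] then
   forwards the head of the buffer to [pid], whose pending [receive] picks it
   up.  [fork] and [newCh] become [spawn], and the fresh names the translation
   chooses for term actors are reconciled by alpha-conversion.  The actor
   substitutes buffered values under binders, so they must be closed terms,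
   which is what the typing hypothesis provides. *)

From Stdlib Require Import List Arith Lia FunctionalExtensionality.
Import ListNotations.

Scheme act_val_ind2 := Induction for act_val Sort Prop
  with act_comp_ind2 := Induction for act_comp Sort Prop.
Combined Scheme act_syntax_ind from act_val_ind2, act_comp_ind2.
Scheme ch_val_ind2 := Induction for ch_val Sort Prop
  with ch_comp_ind2 := Induction for ch_comp Sort Prop.
Combined Scheme ch_syntax_ind from ch_val_ind2, ch_comp_ind2.
Scheme ch_val_typed_ind2 := Induction for ch_val_typed Sort Prop
  with ch_comp_typed_ind2 := Induction for ch_comp_typed Sort Prop.
Combined Scheme ch_typed_ind from ch_val_typed_ind2, ch_comp_typed_ind2.

Ltac rewrite_IHs := repeat match goal with IH : forall _, _ |- _ => rewrite IH end.

(** * Renaming and substitution *)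

Lemma act_ren_ren :
  (forall V r1 r2, act_ren_val r1 (act_ren_val r2 V) = act_ren_val (fun x => r1 (r2 x)) V) /\
  (forall M r1 r2, act_ren_comp r1 (act_ren_comp r2 M) = act_ren_comp (fun x => r1 (r2 x)) M).
Proof.
  apply act_syntax_ind; intros; cbn; rewrite_IHs; f_equal; try reflexivity;
    f_equal; apply functional_extensionality; intros [|[|x]]; reflexivity.
Qed.

Lemma act_up_upren s r : (fun x => act_up s (upren r x)) = act_up (fun x => s (r x)).
Proof. apply functional_extensionality; intros [|x]; reflexivity. Qed.

Lemma act_subst_ren :
  (forall V s r, act_subst_val s (act_ren_val r V) = act_subst_val (fun x => s (r x)) V) /\
  (forall M s r, act_subst_comp s (act_ren_comp r M) = act_subst_comp (fun x => s (r x)) M).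
Proof.
  apply act_syntax_ind; intros; cbn; rewrite_IHs; rewrite ?act_up_upren, ?act_up_upren;
    reflexivity.
Qed.

Lemma act_ren_up r s :
  (fun x => act_ren_val (upren r) (act_up s x)) = act_up (fun x => act_ren_val r (s x)).
Proof.
  apply functional_extensionality; intros [|x]; cbn; [reflexivity|].
  rewrite !(proj1 act_ren_ren). reflexivity.
Qed.

Lemma act_ren_subst :
  (forall V s r, act_ren_val r (act_subst_val s V) =
                 act_subst_val (fun x => act_ren_val r (s x)) V) /\
  (forall M s r, act_ren_comp r (act_subst_comp s M) =
                 act_subst_comp (fun x => act_ren_val r (s x)) M).
Proof.
  apply act_syntax_ind; intros; cbn; rewrite_IHs; rewrite ?act_ren_up, ?act_ren_up;
    reflexivity.
Qed.

Lemma act_up_ren r : act_up (fun x => ActVar (r x)) = (fun x => ActVar (upren r x)).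
Proof. apply functional_extensionality; intros [|x]; reflexivity. Qed.

Lemma act_ren_as_subst :
  (forall V r, act_ren_val r V = act_subst_val (fun x => ActVar (r x)) V) /\
  (forall M r, act_ren_comp r M = act_subst_comp (fun x => ActVar (r x)) M).
Proof.
  apply act_syntax_ind; intros; cbn; rewrite_IHs; rewrite ?act_up_ren, ?act_up_ren;
    reflexivity.
Qed.

Lemma tr_ren :
  (forall V r, tr_val (ch_ren_val r V) = act_ren_val r (tr_val V)) /\
  (forall M r, tr_comp (ch_ren_comp r M) = act_ren_comp r (tr_comp M)).
Proof.
  apply ch_syntax_ind; intros; cbn; rewrite_IHs; try reflexivity.
  rewrite !(proj1 act_ren_ren). reflexivity.
Qed.

Lemma tr_up s : (fun x => tr_val (ch_up s x)) = act_up (fun x => tr_val (s x)).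
Proof.
  apply functional_extensionality; intros [|x]; cbn; [reflexivity|].
  apply (proj1 tr_ren).
Qed.

Lemma tr_subst :
  (forall V s, tr_val (ch_subst_val s V) = act_subst_val (fun x => tr_val (s x)) (tr_val V)) /\
  (forall M s, tr_comp (ch_subst_comp s M) = act_subst_comp (fun x => tr_val (s x)) (tr_comp M)).
Proof.
  apply ch_syntax_ind; intros; cbn; rewrite_IHs; rewrite ?tr_up, ?tr_up; try reflexivity.
  rewrite (proj1 act_subst_ren), (proj1 act_ren_subst). reflexivity.
Qed.

Lemma tr_scons V s :
  (fun x => tr_val (ch_scons V s x)) = act_scons (tr_val V) (fun x => tr_val (s x)).
Proof. apply functional_extensionality; intros [|x]; reflexivity. Qed.

Fixpoint tr_ectx (E : ch_ectx) : act_ectx :=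
  match E with
  | ChHole => ActHole
  | ChELet E N => ActELet (tr_ectx E) (tr_comp N)
  end.

Lemma tr_plug E M : tr_comp (ch_plug E M) = act_plug (tr_ectx E) (tr_comp M).
Proof. induction E; cbn; congruence. Qed.

Lemma tr_tbase M N : ch_tbase M N -> act_tbase (tr_comp M) (tr_comp N).
Proof.
  intros []; cbn; rewrite ?(proj2 tr_subst), ?tr_scons, ?tr_scons; constructor.
Qed.

(** * Free names and name swapping *)

Lemma swap_name_invol a b x : swap_name a b (swap_name a b x) = x.
Proof.
  unfold swap_name.
  destruct (Nat.eqb_spec x a), (Nat.eqb_spec x b); subst;
  repeat first [ rewrite Nat.eqb_refl
               | match goal with |- context [Nat.eqb ?u ?v] => destruct (Nat.eqb_spec u v) end ];
  congruence.
Qed.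

Lemma swap_name_l a b : swap_name a b a = b.
Proof. unfold swap_name; rewrite Nat.eqb_refl; reflexivity. Qed.

Lemma swap_name_other a b x : x <> a -> x <> b -> swap_name a b x = x.
Proof. intros; unfold swap_name; destruct (Nat.eqb_spec x a), (Nat.eqb_spec x b); congruence. Qed.

Lemma in_map_swap_name a b x l : In x (map (swap_name a b) l) <-> In (swap_name a b x) l.
Proof.
  rewrite in_map_iff; split.
  - intros [y [<- Hy]]; rewrite swap_name_invol; auto.
  - intros H; exists (swap_name a b x); rewrite swap_name_invol; auto.
Qed.

Lemma fresh_not_in l : ~ In (fresh l) l.
Proof.
  assert (Hle : forall x, In x l -> x <= fold_right max 0 l).
  { induction l as [|y l IH]; cbn; intros x Hx; [contradiction|].
    destruct Hx as [<-|Hx]; [lia|]. specialize (IH x Hx); lia. }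
  unfold fresh; intros Hin; specialize (Hle _ Hin); lia.
Qed.

Lemma act_swap_ren :
  (forall V a b r, act_swap_val a b (act_ren_val r V) = act_ren_val r (act_swap_val a b V)) /\
  (forall M a b r, act_swap_comp a b (act_ren_comp r M) = act_ren_comp r (act_swap_comp a b M)).
Proof. apply act_syntax_ind; intros; cbn; rewrite_IHs; reflexivity. Qed.

Lemma tr_swap :
  (forall V a b, tr_val (ch_swap_val a b V) = act_swap_val a b (tr_val V)) /\
  (forall M a b, tr_comp (ch_swap_comp a b M) = act_swap_comp a b (tr_comp M)).
Proof.
  apply ch_syntax_ind; intros; cbn; rewrite_IHs; try reflexivity.
  rewrite (proj1 act_swap_ren). reflexivity.
Qed.

Lemma act_fn_ren :
  (forall V r, act_fn_val (act_ren_val r V) = act_fn_val V) /\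
  (forall M r, act_fn_comp (act_ren_comp r M) = act_fn_comp M).
Proof. apply act_syntax_ind; intros; cbn; rewrite_IHs; reflexivity. Qed.

Lemma act_fn_swap :
  (forall V a b, act_fn_val (act_swap_val a b V) = map (swap_name a b) (act_fn_val V)) /\
  (forall M a b, act_fn_comp (act_swap_comp a b M) = map (swap_name a b) (act_fn_comp M)).
Proof. apply act_syntax_ind; intros; cbn; rewrite_IHs; rewrite ?map_app; reflexivity. Qed.

Lemma act_swap_fresh :
  (forall V a b, ~ In a (act_fn_val V) -> ~ In b (act_fn_val V) -> act_swap_val a b V = V) /\
  (forall M a b, ~ In a (act_fn_comp M) -> ~ In b (act_fn_comp M) -> act_swap_comp a b M = M).
Proof.
  apply act_syntax_ind; intros; cbn in *; rewrite ?in_app_iff in *;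
    try (f_equal; solve [firstorder]).
  f_equal; apply swap_name_other; firstorder.
Qed.

Lemma tr_fn :
  (forall V x, In x (act_fn_val (tr_val V)) -> In x (ch_fn_val V)) /\
  (forall M x, In x (act_fn_comp (tr_comp M)) -> In x (ch_fn_comp M)).
Proof.
  apply ch_syntax_ind; intros; cbn in *; rewrite ?(proj1 act_fn_ren) in *;
    repeat rewrite in_app_iff in *; firstorder.
Qed.

Lemma tr_fresh M : ~ In (fresh (ch_fn_comp M)) (act_fn_comp (tr_comp M)).
Proof. intros H. apply (proj2 tr_fn) in H. exact (fresh_not_in _ H). Qed.

Fixpoint act_fn_ectx (E : act_ectx) : list name :=
  match E with ActHole => [] | ActELet E N => act_fn_ectx E ++ act_fn_comp N end.

Lemma act_fn_plug E M x :
  In x (act_fn_comp (act_plug E M)) <-> In x (act_fn_ectx E) \/ In x (act_fn_comp M).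
Proof. induction E; cbn; rewrite ?in_app_iff; [tauto|]. rewrite IHE; tauto. Qed.

Lemma act_fn_list l x : In x (act_fn_val (act_list l)) <-> In x (flat_map act_fn_val l).
Proof. induction l; cbn; rewrite ?in_app_iff; [tauto|]. rewrite IHl; tauto. Qed.

Lemma act_swap_list a b l :
  act_swap_val a b (act_list l) = act_list (map (act_swap_val a b) l).
Proof. induction l as [|v l IH]; cbn; [reflexivity|]. rewrite IH; reflexivity. Qed.

Lemma tr_cfg_fn C x : In x (act_cfg_fn (tr_cfg C)) -> In x (ch_cfg_fn C).
Proof.
  induction C; cbn -[remove]; rewrite ?in_app_iff.
  - tauto.
  - intros H; apply in_remove in H as [H1 H2]. apply in_in_remove; auto.
  - intros H; apply in_remove in H as [[<-|H] Hne]; [congruence|].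
    rewrite app_nil_r in H. apply (proj2 tr_fn); auto.
  - intros [H|H]; [auto|right]. rewrite ?app_nil_r, act_fn_list in H.
    destruct H as [[H|[]]|[]].
    apply in_flat_map in H as [v [Hv Hx]]. apply in_map_iff in Hv as [V [<- HV]].
    apply in_flat_map. exists V; split; auto. apply (proj1 tr_fn); auto.
Qed.

(** * Scoping *)

Fixpoint act_scoped_val (n : nat) (V : act_val) : Prop :=
  match V with
  | ActVar k => k < n
  | ActName _ | ActUnit => True
  | ActLam M => act_scoped_comp (S n) M
  | ActRec M => act_scoped_comp (S (S n)) M
  | ActPair V W => act_scoped_val n V /\ act_scoped_val n W
  | ActInl V | ActInr V | ActRoll V => act_scoped_val n V
  end
with act_scoped_comp (n : nat) (M : act_comp) : Prop :=
  match M with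
  | ActApp V W | ActSend V W => act_scoped_val n V /\ act_scoped_val n W
  | ActLet M N => act_scoped_comp n M /\ act_scoped_comp (S n) N
  | ActReturn V | ActUnroll V => act_scoped_val n V
  | ActLetPair V M => act_scoped_val n V /\ act_scoped_comp (S (S n)) M
  | ActCase V M N => act_scoped_val n V /\ act_scoped_comp (S n) M /\ act_scoped_comp (S n) N
  | ActSpawn M => act_scoped_comp n M
  | ActReceive | ActSelf => True
  end.

Fixpoint ch_scoped_val (n : nat) (V : ch_val) : Prop :=
  match V with
  | ChVar k => k < n
  | ChName _ | ChUnit => True
  | ChLam M => ch_scoped_comp (S n) M
  | ChRec M => ch_scoped_comp (S (S n)) M
  | ChPair V W => ch_scoped_val n V /\ ch_scoped_val n W
  | ChInl V | ChInr V | ChRoll V => ch_scoped_val n V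
  end
with ch_scoped_comp (n : nat) (M : ch_comp) : Prop :=
  match M with
  | ChApp V W | ChGive V W => ch_scoped_val n V /\ ch_scoped_val n W
  | ChLet M N => ch_scoped_comp n M /\ ch_scoped_comp (S n) N
  | ChReturn V | ChUnroll V | ChTake V => ch_scoped_val n V
  | ChLetPair V M => ch_scoped_val n V /\ ch_scoped_comp (S (S n)) M
  | ChCase V M N => ch_scoped_val n V /\ ch_scoped_comp (S n) M /\ ch_scoped_comp (S n) N
  | ChFork M => ch_scoped_comp n M
  | ChNewCh => True
  end.

Fixpoint ch_cfg_closed (C : ch_cfg) : Prop :=
  match C with
  | ChPar C D => ch_cfg_closed C /\ ch_cfg_closed D
  | ChNu _ C => ch_cfg_closed C
  | ChTerm M => ch_scoped_comp 0 M
  | ChBuf _ Vs => Forall (ch_scoped_val 0) Vs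
  end.

Lemma act_up_id s n :
  (forall i, i < n -> s i = ActVar i) -> forall i, i < S n -> act_up s i = ActVar i.
Proof. intros Hs [|i] Hi; cbn; [reflexivity|]. rewrite Hs by lia. reflexivity. Qed.

Lemma act_subst_scoped :
  (forall V n s, act_scoped_val n V -> (forall i, i < n -> s i = ActVar i) ->
     act_subst_val s V = V) /\
  (forall M n s, act_scoped_comp n M -> (forall i, i < n -> s i = ActVar i) ->
     act_subst_comp s M = M).
Proof.
  apply act_syntax_ind; cbn; intros; try tauto;
    repeat match goal with H : _ /\ _ |- _ => destruct H end;
    f_equal; eauto 6 using act_up_id.
Qed.

Lemma act_subst_closed V s : act_scoped_val 0 V -> act_subst_val s V = V.
Proof. intros H; apply (proj1 act_subst_scoped) with 0; auto; lia. Qed.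

Lemma act_ren_closed V r : act_scoped_val 0 V -> act_ren_val r V = V.
Proof. intros H; rewrite (proj1 act_ren_as_subst); apply act_subst_closed; auto. Qed.

Lemma upren_lt n m r : (forall i, i < n -> r i < m) -> forall i, i < S n -> upren r i < S m.
Proof. intros H [|i] Hi; cbn; [lia|]. specialize (H i); lia. Qed.

Lemma act_scoped_ren :
  (forall V n m r, act_scoped_val n V -> (forall i, i < n -> r i < m) ->
     act_scoped_val m (act_ren_val r V)) /\
  (forall M n m r, act_scoped_comp n M -> (forall i, i < n -> r i < m) ->
     act_scoped_comp m (act_ren_comp r M)).
Proof.
  apply act_syntax_ind; cbn; intros; auto;
    repeat match goal with H : _ /\ _ |- _ => destruct H end;
    repeat split; eauto 6 using upren_lt.
Qed.

Lemma tr_scoped :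
  (forall V n, ch_scoped_val n V -> act_scoped_val n (tr_val V)) /\
  (forall M n, ch_scoped_comp n M -> act_scoped_comp n (tr_comp M)).
Proof.
  apply ch_syntax_ind; cbn; intros; auto;
    repeat match goal with H : _ /\ _ |- _ => destruct H end;
    repeat split; eauto; try lia.
  apply (proj1 act_scoped_ren) with n; auto. intros; lia.
Qed.

Lemma tr_closed_list Vs :
  Forall (ch_scoped_val 0) Vs -> Forall (act_scoped_val 0) (map tr_val Vs).
Proof. induction 1; cbn; constructor; auto. apply (proj1 tr_scoped); auto. Qed.

Lemma act_scoped_list l : Forall (act_scoped_val 0) l -> act_scoped_val 0 (act_list l).
Proof. induction 1; cbn; auto. Qed.

Lemma ch_scoped_swap :
  (forall V n a b, ch_scoped_val n (ch_swap_val a b V) = ch_scoped_val n V) /\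
  (forall M n a b, ch_scoped_comp n (ch_swap_comp a b M) = ch_scoped_comp n M).
Proof. apply ch_syntax_ind; intros; cbn; rewrite_IHs; reflexivity. Qed.

Lemma ch_scoped_plug E M n : ch_scoped_comp n (ch_plug E M) -> ch_scoped_comp n M.
Proof. induction E; cbn; tauto. Qed.

Lemma ch_typed_scoped A Nm :
  (forall G V T, ch_val_typed A Nm G V T -> ch_scoped_val (length G) V) /\
  (forall G M T, ch_comp_typed A Nm G M T -> ch_scoped_comp (length G) M).
Proof.
  apply ch_typed_ind; intros; cbn in *; auto.
  apply nth_error_Some; congruence.
Qed.

Lemma ch_cfg_typed_closed A Gm Dl C : ch_cfg_typed A Gm Dl C -> ch_cfg_closed C.
Proof.
  induction 1; cbn; auto.
  - apply (proj2 (ch_typed_scoped A Gm) _ _ _ H).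
  - eapply Forall_impl; [|eassumption].
    intros V HV. apply (proj1 (ch_typed_scoped A Gm) _ _ _ HV).
Qed.

Lemma ch_cfg_closed_swap a b C : ch_cfg_closed (ch_cfg_swap a b C) <-> ch_cfg_closed C.
Proof.
  induction C; cbn; rewrite ?(proj2 ch_scoped_swap); try tauto.
  rewrite Forall_map.
  split; apply Forall_impl; intros V; rewrite (proj1 ch_scoped_swap); auto.
Qed.

Lemma ch_cfg_closed_cong C D : ch_cong C D -> (ch_cfg_closed C <-> ch_cfg_closed D).
Proof. induction 1; cbn in *; rewrite ?ch_cfg_closed_swap; tauto. Qed.

(** * Reduction up to structural congruence *)

Definition act_reduces (C D : act_cfg) : Prop :=
  exists D', act_steps C D' /\ act_cong D' D.

Lemma act_steps_trans C D E : act_steps C D -> act_steps D E -> act_steps C E.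
Proof. induction 1; intros; auto. econstructor; eauto. Qed.

Lemma act_steps_nu a C D : act_steps C D -> act_steps (ActNu a C) (ActNu a D).
Proof. induction 1; econstructor; eauto using acts_nu. Qed.

Lemma act_steps_par C D E : act_steps C D -> act_steps (ActPar C E) (ActPar D E).
Proof. induction 1; econstructor; eauto using acts_par. Qed.

Lemma act_cong_steps C D E :
  act_cong C D -> act_steps D E -> exists E', act_steps C E' /\ act_cong E' E.
Proof.
  intros HCD HDE; destruct HDE.
  - exists C; split; [constructor|auto].
  - exists E; split; [|constructor].
    econstructor; [|eassumption]. eapply acts_equiv; [eassumption|eassumption|constructor].
Qed.

Lemma act_reduces_trans C D E : act_reduces C D -> act_reduces D E -> act_reduces C E.
Proof.
  intros [D1 [S1 H1]] [D2 [S2 H2]].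
  destruct (act_cong_steps _ _ _ H1 S2) as [E' [S3 H3]].
  exists E'; split; [eapply act_steps_trans; eauto|]. eapply actc_trans; eauto.
Qed.

Lemma act_reduces_of_cong C D : act_cong C D -> act_reduces C D.
Proof. intros; exists C; split; [constructor|auto]. Qed.

Lemma act_reduces_refl C : act_reduces C C.
Proof. apply act_reduces_of_cong; constructor. Qed.

Lemma act_reduces_of_step C D : act_step C D -> act_reduces C D.
Proof. intros; exists D; split; [econstructor; [eassumption|constructor]|constructor]. Qed.

Lemma act_reduces_cong_l C C' D : act_cong C C' -> act_reduces C' D -> act_reduces C D.
Proof. intros; eapply act_reduces_trans; [apply act_reduces_of_cong|]; eauto. Qed.

Lemma act_reduces_cong_r C D D' : act_reduces C D' -> act_cong D' D -> act_reduces C D.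
Proof. intros; eapply act_reduces_trans; [|apply act_reduces_of_cong]; eauto. Qed.

Lemma act_reduces_step_l C C' D : act_step C C' -> act_reduces C' D -> act_reduces C D.
Proof. intros; eapply act_reduces_trans; [apply act_reduces_of_step|]; eauto. Qed.

Lemma act_reduces_nu a C D : act_reduces C D -> act_reduces (ActNu a C) (ActNu a D).
Proof.
  intros [D' [S H]]; exists (ActNu a D'); split; [apply act_steps_nu|apply actc_nu]; auto.
Qed.

Lemma act_reduces_par C D E : act_reduces C D -> act_reduces (ActPar C E) (ActPar D E).
Proof.
  intros [D' [S H]]; exists (ActPar D' E); split; [apply act_steps_par|apply actc_par]; auto.
Qed.

Lemma act_reduces_par_r C D E : act_reduces C D -> act_reduces (ActPar E C) (ActPar E D).
Proof.
  intros H. eapply act_reduces_cong_l; [apply actc_comm|].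
  eapply act_reduces_cong_r; [|apply actc_comm]. apply act_reduces_par; auto.
Qed.

Lemma actc_par_r C D E : act_cong C D -> act_cong (ActPar E C) (ActPar E D).
Proof.
  intros H. eapply actc_trans; [apply actc_comm|].
  eapply actc_trans; [apply actc_par; eauto|]. apply actc_comm.
Qed.

Lemma actc_extr_l a C D : ~ In a (act_cfg_fn D) ->
  act_cong (ActNu a (ActPar C D)) (ActPar (ActNu a C) D).
Proof.
  intros H. apply actc_sym.
  eapply actc_trans; [apply actc_comm|]. eapply actc_trans; [apply actc_extr; auto|].
  apply actc_nu, actc_comm.
Qed.

Lemma actc_alpha_actor b c M : ~ In b (act_fn_comp M) -> ~ In c (act_fn_comp M) ->
  act_cong (ActNu b (ActActor b M [])) (ActNu c (ActActor c M [])).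
Proof.
  intros Hb Hc. destruct (Nat.eq_dec b c) as [<-|Hne]; [constructor|].
  eapply actc_trans; [apply (actc_alpha b c)|].
  - cbn. rewrite app_nil_r. intros [E|E]; [congruence|contradiction].
  - cbn. rewrite swap_name_l, (proj2 act_swap_fresh); auto. constructor.
Qed.

Inductive act_tsteps : act_comp -> act_comp -> Prop :=
| act_tsteps_refl M : act_tsteps M M
| act_tsteps_cons M N P : act_tstep M N -> act_tsteps N P -> act_tsteps M P.

Lemma act_tsteps_trans M N P : act_tsteps M N -> act_tsteps N P -> act_tsteps M P.
Proof. induction 1; intros; auto. econstructor; eauto. Qed.

Fixpoint act_ectx_comp (E1 E2 : act_ectx) : act_ectx :=
  match E1 with
  | ActHole => E2
  | ActELet E N => ActELet (act_ectx_comp E E2) N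
  end.

Lemma act_plug_comp E1 E2 M : act_plug (act_ectx_comp E1 E2) M = act_plug E1 (act_plug E2 M).
Proof. induction E1; cbn; congruence. Qed.

Lemma act_plug_let E M K :
  act_plug E (ActLet M K) = act_plug (act_ectx_comp E (ActELet ActHole K)) M.
Proof. rewrite act_plug_comp; reflexivity. Qed.

Lemma act_tstep_plug E M N : act_tstep M N -> act_tstep (act_plug E M) (act_plug E N).
Proof. intros []. rewrite <- !act_plug_comp. constructor; auto. Qed.

Lemma act_tsteps_plug E M N : act_tsteps M N -> act_tsteps (act_plug E M) (act_plug E N).
Proof. induction 1; econstructor; eauto using act_tstep_plug. Qed.

Lemma act_tsteps_let M N K : act_tsteps M N -> act_tsteps (ActLet M K) (ActLet N K).
Proof. apply (act_tsteps_plug (ActELet ActHole K)). Qed.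

Lemma act_reduces_tsteps a M N Vs B :
  act_tsteps M N -> act_reduces (ActActor a N Vs) B -> act_reduces (ActActor a M Vs) B.
Proof.
  induction 1; intros; auto.
  eapply act_reduces_step_l; [apply acts_liftM; eauto|]. auto.
Qed.

Lemma act_reduces_par_tsteps a M N Vs C B :
  act_tsteps M N -> act_reduces (ActPar (ActActor a N Vs) C) B ->
  act_reduces (ActPar (ActActor a M Vs) C) B.
Proof.
  intros HMN H. eapply act_reduces_trans; [|exact H].
  apply act_reduces_par, act_reduces_tsteps with N; [auto|apply act_reduces_refl].
Qed.

(** * The channel actor *)

Ltac act_tstep_head :=
  first [ apply (act_tstep_ctx ActHole); constructor
        | apply (act_tstep_plug (ActELet ActHole _)); act_tstep_head ].

Ltac simpl_closed :=
  repeat match goal with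
  | |- context [act_ren_val ?r ?V] => rewrite (act_ren_closed V r) by auto
  | |- context [act_subst_val ?s ?V] => rewrite (act_subst_closed V s) by auto
  end.

Ltac eval_step :=
  unfold act_append, act_drain, act_body, act_nil, act_cons in *;
  eapply act_tsteps_cons; [act_tstep_head|];
  match goal with |- act_tsteps ?M ?N => let M' := eval cbn in M in change (act_tsteps M' N) end;
  simpl_closed.

Ltac eval_steps := repeat first [apply act_tsteps_refl | eval_step].

Lemma act_append_spec l m :
  Forall (act_scoped_val 0) l -> act_scoped_val 0 (act_list m) ->
  act_tsteps (ActApp act_append (ActPair (act_list l) (act_list m)))
             (ActReturn (act_list (l ++ m))).
Proof.
  intros Hl Hm. induction Hl as [|x l Hx Hl IH]; cbn [act_list app].
  - eval_steps.
  - assert (act_scoped_val 0 (act_list l)) by (apply act_scoped_list; auto).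
    do 6 eval_step.
    eapply act_tsteps_trans; [apply act_tsteps_let, IH|].
    eval_steps.
Qed.

Lemma act_body_handles_give a l w :
  Forall (act_scoped_val 0) l -> act_scoped_val 0 w ->
  act_reduces (ActActor a (ActApp act_body (ActPair (act_list l) act_nil)) [ActInl w])
              (ActActor a (ActApp act_body (ActPair (act_list (l ++ [w])) act_nil)) []).
Proof.
  intros Hl Hw. assert (act_scoped_val 0 (act_list l)) by (apply act_scoped_list; auto).
  eapply act_reduces_tsteps; [eval_step; apply act_tsteps_refl|].
  eapply act_reduces_step_l; [apply (acts_receive a (ActELet ActHole _))|].
  eapply act_reduces_tsteps; [do 3 eval_step; apply act_tsteps_refl|].
  eapply act_reduces_tsteps.
  { eapply act_tsteps_trans; [apply act_tsteps_let, (act_append_spec l [w]); cbn; auto|].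
    eval_step; apply act_tsteps_refl. }
  assert (Hlw : Forall (act_scoped_val 0) (l ++ [w])) by (apply Forall_app; auto).
  destruct (l ++ [w]) as [|x r] eqn:Hxr; [destruct l; discriminate|].
  inversion Hlw; subst.
  assert (act_scoped_val 0 (act_list r)) by (apply act_scoped_list; auto).
  apply act_reduces_tsteps with (2 := act_reduces_refl _). cbn [act_list]. eval_steps.
Qed.

Lemma act_body_handles_take a g l w M Ws :
  Forall (act_scoped_val 0) l -> act_scoped_val 0 w ->
  act_reduces
    (ActPar (ActActor a (ActApp act_body (ActPair (act_list (w :: l)) act_nil))
                       [ActInr (ActName g)])
            (ActActor g M Ws))
    (ActPar (ActActor a (ActApp act_body (ActPair (act_list l) act_nil)) [])
            (ActActor g M (Ws ++ [w]))).
Proof.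
  intros Hl Hw. assert (act_scoped_val 0 (act_list l)) by (apply act_scoped_list; auto).
  cbn [act_list].
  eapply act_reduces_par_tsteps; [eval_step; apply act_tsteps_refl|].
  eapply act_reduces_step_l; [apply acts_par, (acts_receive a (ActELet ActHole _))|].
  eapply act_reduces_par_tsteps; [do 3 eval_step; apply act_tsteps_refl|].
  eapply act_reduces_par_tsteps.
  { eapply act_tsteps_trans; [apply act_tsteps_let, (act_append_spec [] [ActName g]); cbn; auto|].
    repeat eval_step; apply act_tsteps_refl. }
  eapply act_reduces_step_l; [apply (acts_send a (ActELet (ActELet ActHole _) _))|].
  apply act_reduces_par, act_reduces_tsteps with (2 := act_reduces_refl _).
  eval_steps.
Qed.

(** * Simulation *)

Lemma tr_cfg_term_alpha M g :
  ~ In g (act_fn_comp (tr_comp M)) ->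
  act_cong (tr_cfg (ChTerm M)) (ActNu g (ActActor g (tr_comp M) [])).
Proof. intros Hg. apply actc_alpha_actor; [apply tr_fresh|exact Hg]. Qed.

Lemma tr_cfg_swap a b C : act_cong (act_cfg_swap a b (tr_cfg C)) (tr_cfg (ch_cfg_swap a b C)).
Proof.
  induction C; cbn [ch_cfg_swap].
  - eapply actc_trans; [apply actc_par; eauto|]. apply actc_par_r; auto.
  - apply actc_nu; auto.
  - set (f := fresh (ch_fn_comp M)).
    apply actc_sym; eapply actc_trans; [apply (tr_cfg_term_alpha _ (swap_name a b f))|].
    + rewrite (proj2 tr_swap), (proj2 act_fn_swap), in_map_swap_name, swap_name_invol.
      apply tr_fresh.
    + cbn. rewrite (proj2 tr_swap). apply actc_refl.
  - cbn. rewrite act_swap_list, !map_map.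
    erewrite map_ext; [apply actc_refl|]. intros V. symmetry. apply (proj1 tr_swap).
Qed.

Lemma tr_cong C D : ch_cong C D -> act_cong (tr_cfg C) (tr_cfg D).
Proof.
  induction 1; cbn [tr_cfg].
  - constructor.
  - apply actc_sym; auto.
  - eapply actc_trans; eauto.
  - apply actc_comm.
  - apply actc_assoc.
  - apply actc_extr. intros Hin; apply tr_cfg_fn in Hin; auto.
  - apply actc_nu_swap.
  - eapply actc_trans; [apply (actc_alpha a b)|].
    + intros Hin; apply tr_cfg_fn in Hin; auto.
    + apply actc_nu, tr_cfg_swap.
  - apply actc_par; auto.
  - apply actc_nu; auto.
Qed.

(* The name of a term's actor is chosen fresh for the term, and reduction
   changes the free names, so both sides are renamed to a common fresh name. *)
Lemma act_reduces_tr_term M M' :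
  (forall g, act_reduces (ActActor g (tr_comp M) []) (ActActor g (tr_comp M') [])) ->
  act_reduces (tr_cfg (ChTerm M)) (tr_cfg (ChTerm M')).
Proof.
  intros Hsim.
  set (g := fresh (act_fn_comp (tr_comp M) ++ act_fn_comp (tr_comp M'))).
  pose proof (fresh_not_in (act_fn_comp (tr_comp M) ++ act_fn_comp (tr_comp M'))) as Hg.
  fold g in Hg; rewrite in_app_iff in Hg.
  eapply act_reduces_cong_l; [apply (tr_cfg_term_alpha _ g); tauto|].
  eapply act_reduces_cong_r; [|apply actc_sym, (tr_cfg_term_alpha _ g); tauto].
  apply act_reduces_nu, Hsim.
Qed.

Lemma act_reduces_tr_term_par M M' C C' :
  (forall g, act_reduces (ActPar (ActActor g (tr_comp M) []) (tr_cfg C))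
                         (ActPar (ActActor g (tr_comp M') []) (tr_cfg C'))) ->
  act_reduces (tr_cfg (ChPar (ChTerm M) C)) (tr_cfg (ChPar (ChTerm M') C')).
Proof.
  intros Hsim.
  set (L := act_fn_comp (tr_comp M) ++ act_fn_comp (tr_comp M') ++
            act_cfg_fn (tr_cfg C) ++ act_cfg_fn (tr_cfg C')).
  set (g := fresh L).
  pose proof (fresh_not_in L) as Hg; fold g in Hg; unfold L in Hg; rewrite !in_app_iff in Hg.
  cbn [tr_cfg]; fold (tr_cfg (ChTerm M)) (tr_cfg (ChTerm M')).
  eapply act_reduces_cong_l.
  { apply actc_par, (tr_cfg_term_alpha _ g); tauto. }
  eapply act_reduces_cong_l; [apply actc_sym, actc_extr_l; tauto|].
  eapply act_reduces_cong_r; [|apply actc_par, actc_sym, (tr_cfg_term_alpha _ g); tauto].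
  eapply act_reduces_cong_r; [|apply actc_extr_l; tauto].
  apply act_reduces_nu, Hsim.
Qed.

Lemma act_reduces_nu_spawn f c E M :
  ~ In f (act_fn_comp (act_plug E (ActSpawn M))) ->
  ~ In c (act_fn_comp (act_plug E (ActSpawn M))) -> c <> f ->
  act_reduces (ActNu f (ActActor f (act_plug E (ActSpawn M)) []))
              (ActNu c (ActPar (ActNu f (ActActor f (act_plug E (ActReturn (ActName c))) []))
                               (ActActor c M []))).
Proof.
  intros Hf Hc Hcf.
  eapply act_reduces_step_l.
  { apply acts_nu, (acts_spawn f E M [] c). cbn. rewrite app_nil_r.
    intros [H|H]; [congruence|contradiction]. }
  apply act_reduces_of_cong.
  eapply actc_trans; [apply actc_nu_swap|]. apply actc_nu, actc_extr_l.
  cbn. rewrite app_nil_r. intros [H|H]; [auto|].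
  apply Hf, act_fn_plug; right; exact H.
Qed.

Lemma tr_simulates_tbase E M N :
  ch_tbase M N -> act_reduces (tr_cfg (ChTerm (ch_plug E M))) (tr_cfg (ChTerm (ch_plug E N))).
Proof.
  intros HMN. apply act_reduces_tr_term; intros g.
  apply act_reduces_of_step, acts_liftM. rewrite !tr_plug.
  apply act_tstep_ctx, tr_tbase; auto.
Qed.

Lemma tr_simulates_give E W a Vs :
  ch_scoped_val 0 W -> Forall (ch_scoped_val 0) Vs ->
  act_reduces (tr_cfg (ChPar (ChTerm (ch_plug E (ChGive W (ChName a)))) (ChBuf a Vs)))
              (tr_cfg (ChPar (ChTerm (ch_plug E (ChReturn ChUnit))) (ChBuf a (Vs ++ [W])))).
Proof.
  intros HW HVs. apply act_reduces_tr_term_par; intros g.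
  rewrite !tr_plug; cbn [tr_comp tr_val tr_cfg].
  eapply act_reduces_step_l; [apply (acts_send g (tr_ectx E))|].
  apply act_reduces_par_r. rewrite map_app. apply act_body_handles_give.
  - apply tr_closed_list; auto.
  - apply (proj1 tr_scoped); auto.
Qed.

Lemma tr_simulates_take E W a Vs :
  ch_scoped_val 0 W -> Forall (ch_scoped_val 0) Vs ->
  act_reduces (tr_cfg (ChPar (ChTerm (ch_plug E (ChTake (ChName a)))) (ChBuf a (W :: Vs))))
              (tr_cfg (ChPar (ChTerm (ch_plug E (ChReturn W))) (ChBuf a Vs))).
Proof.
  intros HW HVs. apply act_reduces_tr_term_par; intros g.
  rewrite !tr_plug; cbn [tr_comp tr_val tr_cfg act_ren_val map].
  rewrite !act_plug_let.
  eapply act_reduces_step_l; [apply acts_par, acts_self|].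
  rewrite <- act_plug_let.
  eapply act_reduces_par_tsteps.
  { apply act_tsteps_plug. eval_step. apply act_tsteps_refl. }
  rewrite act_plug_let.
  eapply act_reduces_step_l; [apply acts_send|].
  eapply act_reduces_cong_l; [apply actc_comm|].
  eapply act_reduces_trans.
  { apply act_body_handles_take; [apply tr_closed_list | apply (proj1 tr_scoped)]; auto. }
  eapply act_reduces_cong_l; [apply actc_comm|].
  rewrite <- act_plug_let.
  eapply act_reduces_par_tsteps; [apply act_tsteps_plug; eval_step; apply act_tsteps_refl|].
  eapply act_reduces_step_l; [apply acts_par, acts_receive|]. apply act_reduces_refl.
Qed.

Lemma tr_simulates_fork E M :
  act_reduces (tr_cfg (ChTerm (ch_plug E (ChFork M))))
              (tr_cfg (ChPar (ChTerm (ch_plug E (ChReturn ChUnit))) (ChTerm M))).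
Proof.
  pose proof (tr_fresh (ch_plug E (ChFork M))) as Hf.
  pose proof (tr_fresh (ch_plug E (ChReturn ChUnit))) as Hf1.
  pose proof (tr_fresh M) as Hf2.
  cbn [tr_cfg]; rewrite !tr_plug in *; cbn [tr_comp tr_val] in *.
  set (f := fresh (ch_fn_comp (ch_plug E (ChFork M)))) in *.
  set (f1 := fresh (ch_fn_comp (ch_plug E (ChReturn ChUnit)))) in *.
  set (P := act_plug (tr_ectx E) (ActLet (ActSpawn (tr_comp M)) (ActReturn ActUnit))) in *.
  set (c := fresh (f :: act_fn_comp P)).
  pose proof (fresh_not_in (f :: act_fn_comp P)) as Hc; fold c in Hc; cbn in Hc.
  assert (HfE : ~ In f (act_fn_ectx (tr_ectx E)) /\ ~ In f (act_fn_comp (tr_comp M))).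
  { unfold P in Hf; rewrite act_fn_plug in Hf; cbn in Hf; rewrite !in_app_iff in Hf; tauto. }
  assert (HcE : ~ In c (act_fn_ectx (tr_ectx E)) /\ ~ In c (act_fn_comp (tr_comp M))).
  { unfold P in Hc; rewrite act_fn_plug in Hc; cbn in Hc; rewrite !in_app_iff in Hc; tauto. }
  unfold P; rewrite act_plug_let.
  eapply act_reduces_trans; [apply (act_reduces_nu_spawn f c)|].
  1-2: rewrite <- act_plug_let; fold P; tauto.
  1: intros ->; tauto.
  rewrite <- act_plug_let.
  eapply act_reduces_trans.
  { apply act_reduces_nu, act_reduces_par, act_reduces_nu, act_reduces_tsteps
      with (2 := act_reduces_refl _).
    apply act_tsteps_plug. eval_step. apply act_tsteps_refl. }
  apply act_reduces_of_cong.
  eapply actc_trans.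
  { apply actc_sym, actc_extr. cbn -[remove]. rewrite app_nil_r.
    intros H; apply in_remove in H as [[H|H] _]; [tauto|].
    apply act_fn_plug in H; cbn in H; tauto. }
  eapply actc_trans; [apply actc_par, (actc_alpha_actor f f1)|].
  - rewrite act_fn_plug; cbn; tauto.
  - exact Hf1.
  - apply actc_par_r, actc_alpha_actor; tauto.
Qed.

Lemma tr_simulates_newch E a :
  ~ In a (ch_fn_comp (ch_plug E ChNewCh)) ->
  act_reduces (tr_cfg (ChTerm (ch_plug E ChNewCh)))
              (tr_cfg (ChNu a (ChPar (ChTerm (ch_plug E (ChReturn (ChName a)))) (ChBuf a [])))).
Proof.
  intros Ha.
  assert (HaP : ~ In a (act_fn_comp (tr_comp (ch_plug E ChNewCh))))
    by (intros H; apply (proj2 tr_fn) in H; auto).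
  pose proof (tr_fresh (ch_plug E ChNewCh)) as Hf.
  pose proof (tr_fresh (ch_plug E (ChReturn (ChName a)))) as Hf1.
  cbn [tr_cfg map act_list]; rewrite !tr_plug in *; cbn [tr_comp tr_val] in *.
  set (P := act_plug (tr_ectx E) (ActSpawn (ActApp act_body (ActPair act_nil act_nil)))) in *.
  set (g := fresh (a :: act_fn_comp P)).
  pose proof (fresh_not_in (a :: act_fn_comp P)) as Hg; fold g in Hg; cbn in Hg.
  eapply act_reduces_cong_l; [apply (actc_alpha_actor _ g); tauto|].
  eapply act_reduces_trans; [apply (act_reduces_nu_spawn g a); tauto|].
  apply act_reduces_of_cong, actc_nu, actc_par, actc_alpha_actor; [|exact Hf1].
  unfold P in Hg; rewrite !act_fn_plug in *; cbn in *; tauto.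
Qed.

Lemma tr_simulates_step C1 C2 :
  ch_step C1 C2 -> ch_cfg_closed C1 -> act_reduces (tr_cfg C1) (tr_cfg C2).
Proof.
  induction 1 as [E W a Vs|E W a Vs|E M|E a Ha|M N [E M0 N0 Hb]|a C D _ IH|C D E _ IH
                 |C C' D' D HC _ IH HD]; cbn [ch_cfg_closed]; intros Hcl.
  - destruct Hcl as [HM HVs]. apply ch_scoped_plug in HM; cbn in HM.
    apply tr_simulates_give; tauto.
  - destruct Hcl as [_ HVs]. inversion HVs; subst. apply tr_simulates_take; auto.
  - apply tr_simulates_fork.
  - apply tr_simulates_newch; auto.
  - apply tr_simulates_tbase; auto.
  - apply act_reduces_nu; auto.
  - apply act_reduces_par; tauto.
  - eapply act_reduces_cong_l; [apply tr_cong; eauto|].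
    eapply act_reduces_cong_r; [|apply tr_cong; eauto].
    apply IH, (ch_cfg_closed_cong _ _ HC); auto.
Qed.

Theorem theorem27 (A : ty) (Gm Dl : list name) (C1 C2 : ch_cfg) :
  ch_cfg_typed A Gm Dl C1 ->
  ch_step C1 C2 ->
  exists D, act_steps (tr_cfg C1) D /\ act_cong D (tr_cfg C2).
Proof.
  intros Htyped Hstep.
  apply (tr_simulates_step _ _ Hstep).
  exact (ch_cfg_typed_closed _ _ _ _ Htyped).
Qed.
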